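(* Let $k_1,k_2,k_1',k_2'\ge0$ be integers. Then (i) $(1+t)^{k_1}(1-t)^{k_2}\doteq1$ if and only if $k_1=k_2=0$; (ii) $(1+t)^{k_1}(1-t)^{k_2}\doteq(1+t)^{k_1'}(1-t)^{k_2'}$ if and only if $k_1=k_1'$ and $k_2=k_2'$.
   Context: Let $I_t$ be the ideal of $\mathbb Z[t^{\pm1/2}]$ generated by $\frac{t^5+1}{t+1}=t^4-t^3+t^2-t+1$. For $f,g\in\mathbb Z[t^{\pm1/2}]$ write $f\doteq g$ if $f\equiv\pm t^{i/2}g\pmod{I_t}$ for some sign and some integer $i$. *)

(* Model: Z[t^{±1/2}] = Z[s^{±1}] with s = t^{1/2}, realised inside the
   fraction field K = Frac(Z[s]) as the subring of elements p / s^n. *)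
From HB Require Import structures.
From mathcomp Require Import all_boot all_order all_algebra.
Set Implicit Arguments. Unset Strict Implicit. Unset Printing Implicit Defensive.
Import Order.TTheory GRing.Theory Num.Theory.
Local Open Scope ring_scope.

Definition K := {fraction {poly int}}.

Definition s : K := tofrac ('X : {poly int}).
Definition t : K := s ^+ 2.

Definition inLaurent (x : K) : Prop :=
  exists (p : {poly int}) (n : nat), x = tofrac p / s ^+ n.

(* generator of I_t : (t^5+1)/(t+1) = t^4 - t^3 + t^2 - t + 1 *)
Definition Phi10 : K := t ^+ 4 - t ^+ 3 + t ^+ 2 - t + 1.

Definition inI (x : K) : Prop :=
  exists h : K, inLaurent h /\ x = h * Phi10.

Definition doteq (f g : K) : Prop :=
  exists (b : bool) (i : int), inI (f - (-1) ^+ b * s ^ i * g).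

Definition P (k1 k2 : nat) : K := (1 + t) ^+ k1 * (1 - t) ^+ k2.

From mathcomp Require Import all_boot all_order all_algebra all_field.
From mathcomp Require Import ring zify.
Set Warnings "-notation-overridden,-ambiguous-paths".
Set Implicit Arguments. Unset Strict Implicit. Unset Printing Implicit Defensive.
Import GRing.Theory Num.Theory.
Local Open Scope ring_scope.

(* Map s = t^{1/2} to a root y of unity with w = y^2 a root of Phi10. A relation
   P k1 k2 = +- s^i P k1' k2' mod I_t then becomes an equality of moduli
   |1 + w|^(2 k1) |1 - w|^(2 k2) = |1 + w|^(2 k1') |1 - w|^(2 k2'), i.e.
   (2 + u)^k1 (2 - u)^k2 = (2 + u)^k1' (2 - u)^k2' with u = w + w^-1 a root of
   u^2 = u + 1. Replacing y by y^3 replaces u by its conjugate 1 - u; since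
   2 + u has norm 5 and 2 - u is a unit of infinite order, the exponents agree. *)

Definition phi10 (R : nzRingType) (x : R) : R := x ^+ 4 - x ^+ 3 + x ^+ 2 - x + 1.

Definition P_at (R : nzRingType) (x : R) (a b : nat) : R := (1 + x) ^+ a * (1 - x) ^+ b.

Lemma rmorph_phi10 (R S : nzRingType) (f : {rmorphism R -> S}) (x : R) :
  f (phi10 x) = phi10 (f x).
Proof.
by rewrite /phi10 (rmorphD f) (rmorphB f) (rmorphD f) (rmorphB f) !(rmorphXn f) (rmorph1 f).
Qed.

Lemma doteq_refl (f : K) : doteq f f.
Proof.
exists false, 0; exists 0; split; first by exists 0, 0%N; rewrite mul0r.
by rewrite expr0 mul1r expr0z mul1r subrr mul0r.
Qed.

Lemma s_neq0 : s != 0.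
Proof. by rewrite /s tofrac_eq0 polyX_eq0. Qed.

Lemma clear_denominator (F : fieldType) (x A B e q r : F) (n N M : nat) :
  x != 0 -> (n <= N)%N -> A - e * (x ^+ M / x ^+ N) * B = q / x ^+ n * r ->
  x ^+ N * A - e * x ^+ M * B = q * x ^+ (N - n) * r.
Proof.
move=> x0 leNn E.
have xn0 : x ^+ n != 0 by rewrite expf_neq0.
have xN0 : x ^+ N != 0 by rewrite expf_neq0.
have xN : x ^+ N = x ^+ (N - n) * x ^+ n by rewrite -exprD subnK.
transitivity (x ^+ N * (A - e * (x ^+ M / x ^+ N) * B)); first by field.
by rewrite E xN; field.
Qed.

(* Clearing the denominators of the cofactor and of s^i turns the congruence
   into an identity of integer polynomials in s, which can then be evaluated. *)
Lemma doteq_tofrac_poly (f g : {poly int}) : doteq (tofrac f) (tofrac g) ->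
  exists (c : bool) (N M : nat) (q : {poly int}),
    'X^N * f - (-1) ^+ c * 'X^M * g = q * phi10 ('X ^+ 2).
Proof.
move=> [c [i [h [[p [n ->]] E]]]].
have [N [M [leNn Ei]]] : exists N M : nat, (n <= N)%N /\ i = M%:Z - N%:Z.
  by case: i {E} => m; [exists n, (n + m)%N | exists (n + m.+1)%N, n]; lia.
exists c, N, M, (p * 'X^(N - n)); apply/eqP; rewrite -tofrac_eq; apply/eqP.
rewrite !(rmorphM, rmorphB, rmorph_sign, rmorphXn) rmorph_phi10 rmorphXn.
change (s ^+ N * tofrac f - (-1) ^+ c * s ^+ M * tofrac g =
        tofrac p * s ^+ (N - n) * Phi10).
rewrite Ei expfzDr ?s_neq0 // -exprnN in E.
exact: clear_denominator s_neq0 leNn E.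
Qed.

Lemma tofrac_P_at a b : tofrac (P_at ('X ^+ 2) a b) = P a b.
Proof. by rewrite /P_at rmorphM !rmorphXn rmorphD rmorphB rmorph1 rmorphXn. Qed.

Notation evalC y := (horner_morph (fun a : int => mulrC (y : algC) a%:~R)).

Lemma evalC_X y : evalC y 'X = y.
Proof. exact: horner_morphX. Qed.

Lemma evalC_P_at y a b : evalC y (P_at ('X ^+ 2) a b) = P_at (y ^+ 2) a b.
Proof. by rewrite /P_at rmorphM !rmorphXn rmorphD rmorphB rmorph1 rmorphXn /= evalC_X. Qed.

Lemma poly_identity_norm_eq (f g q : {poly int}) (c : bool) (N M : nat) (y : algC) :
  'X^N * f - (-1) ^+ c * 'X^M * g = q * phi10 ('X ^+ 2) ->
  `|y| = 1 -> phi10 (y ^+ 2) = 0 -> `|evalC y f| = `|evalC y g|.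
Proof.
move=> /(congr1 (evalC y)) + y1 y0.
rewrite !(rmorphM, rmorphB, rmorph_sign, rmorphXn) rmorph_phi10 rmorphXn /= evalC_X y0 mulr0.
move/eqP; rewrite subr_eq0 => /eqP /(congr1 Num.norm).
by rewrite !normrM !normrX normrN1 y1 !expr1n !mul1r.
Qed.

Lemma normC_P_at_sqr (w : algC) a b : `|w| = 1 ->
  `|P_at w a b| ^+ 2 = (2 + (w + w^*)) ^+ a * (2 - (w + w^*)) ^+ b.
Proof.
move=> w1; have ww : w * w^* = 1 by rewrite -normCK w1 expr1n.
rewrite /P_at normrM !normrX exprMn -!exprM mulnC [(b * 2)%N]mulnC !exprM !normCK.
rewrite !(rmorphD, rmorphB, rmorph1).
congr (_ ^+ _ * _ ^+ _).
- by transitivity (1 + (w + w^*) + w * w^*); [ring | rewrite ww; ring].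
- by transitivity (1 - (w + w^*) + w * w^*); [ring | rewrite ww; ring].
Qed.

Lemma phi10_norm1 (R : numDomainType) (w : R) : phi10 w = 0 -> `|w| = 1.
Proof.
move=> w0; have w5 : w ^+ 5 = -1.
  apply/eqP; rewrite -subr_eq0 opprK.
  have -> : w ^+ 5 + 1 = (w + 1) * phi10 w by rewrite /phi10; ring.
  by rewrite w0 mulr0.
by apply/eqP; rewrite -(@pexpr_eq1 _ _ 5) // -normrX w5 normrN1.
Qed.

Lemma phi10_expr3 (R : comNzRingType) (w : R) : phi10 w = 0 -> phi10 (w ^+ 3) = 0.
Proof.
move=> w0.
have -> : phi10 (w ^+ 3) = phi10 w * (1 + (w + 1) * (w ^+ 7 - w ^+ 4 - w ^+ 2 + w)).
  by rewrite /phi10; ring.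
by rewrite w0 mul0r.
Qed.

Lemma phi10_neq0 (F : fieldType) (w : F) : phi10 w = 0 -> w != 0.
Proof.
move=> w0; apply: (contra_eq_neq _ w0) => ->.
by rewrite /phi10 !expr0n /= subrr !(sub0r, add0r, subr0) oner_eq0.
Qed.

Lemma phi10_trace_sqr (F : fieldType) (w : F) :
  phi10 w = 0 -> (w + w^-1) ^+ 2 = w + w^-1 + 1.
Proof.
move=> w0; have wn0 := phi10_neq0 w0.
apply/eqP; rewrite -subr_eq0; apply/eqP.
transitivity (w ^- 2 * phi10 w); first by rewrite /phi10; field.
by rewrite w0 mulr0.
Qed.

Lemma phi10_trace_expr3 (F : fieldType) (w : F) :
  phi10 w = 0 -> w ^+ 3 + w^-1 ^+ 3 = 1 - (w + w^-1).
Proof.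
move=> w0; have wn0 := phi10_neq0 w0.
apply/eqP; rewrite -subr_eq0; apply/eqP.
transitivity (w ^- 3 * (w ^+ 2 + w + 1) * phi10 w); first by rewrite /phi10; field.
by rewrite w0 mulr0.
Qed.

(* 2 + u and 2 + (1 - u) multiply to 5, while 2 - u and 2 - (1 - u) multiply to 1
   and 2 - u is real of absolute value different from 1. *)
Lemma golden_exponents_inj (R : numFieldType) (u : R) (a b a' b' : nat) :
  u \is Num.real -> u ^+ 2 = u + 1 ->
  (2 + u) ^+ a * (2 - u) ^+ b = (2 + u) ^+ a' * (2 - u) ^+ b' ->
  (2 + (1 - u)) ^+ a * (2 - (1 - u)) ^+ b =
    (2 + (1 - u)) ^+ a' * (2 - (1 - u)) ^+ b' ->
  a = a' /\ b = b'.
Proof.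
move=> ur u2 E E'.
have norm5 : (2 + u) * (2 + (1 - u)) = 5.
  by transitivity (6 + u - u ^+ 2); [ring | rewrite u2; ring].
have norm1 : (2 - u) * (2 - (1 - u)) = 1.
  by transitivity (2 + u - u ^+ 2); [ring | rewrite u2; ring].
have aa' : a = a'.
  have exp5_inj : injective (GRing.exp (5 : R)) by apply: ieexprIn; rewrite ?ltr0n ?pnatr_eq1.
  apply: exp5_inj; move: (congr2 *%R E E').
  by rewrite [LHS]mulrACA [RHS]mulrACA -!exprMn norm5 norm1 !expr1n !mulr1.
subst a'; split=> //.
have x0 : 2 - u != 0.
  by apply: (contra_eq_neq _ norm1) => ->; rewrite mul0r eq_sym oner_eq0.
have xnorm1 : `|2 - u| != 1.
  apply/eqP => x1.
  have x2 : (2 - u) ^+ 2 = 1 by rewrite -real_normK ?x1 ?expr1n // rpredB ?realn.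
  have x3 : 3 * (2 - u) = 2.
    transitivity ((2 - u) ^+ 2 + 1); last by rewrite x2.
    by transitivity (5 - 4 * u + u ^+ 2); [rewrite u2; ring | ring].
  have : (9 : R) = 4.
    by transitivity ((3 * (2 - u)) ^+ 2); [rewrite exprMn x2; ring | rewrite x3; ring].
  by move/eqP; rewrite (eqr_nat R 9 4).
have ua0 : (2 + u) ^+ a != 0.
  rewrite expf_neq0 //; apply: (contra_eq_neq _ norm5) => ->.
  by rewrite mul0r eq_sym pnatr_eq0.
have exp_inj : injective (GRing.exp `|2 - u|) by apply: ieexprIn; rewrite ?normr_gt0.
by apply: exp_inj; rewrite -!normrX (mulfI ua0 E).
Qed.

Lemma exists_phi10_root : exists w : algC, phi10 w = 0.
Proof.
have [w Dw] := @solve_monicpoly algC 4 (nth 0 [:: -1; 1; -1; 1]) isT.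
by exists w; rewrite /phi10 Dw !big_ord_recl big_ord0 /=; ring.
Qed.

Lemma doteq_P_inj a b a' b' : doteq (P a b) (P a' b') -> a = a' /\ b = b'.
Proof.
rewrite -!tofrac_P_at => /doteq_tofrac_poly [c [N [M [q Eq]]]].
have trace_eq (y : algC) : `|y| = 1 -> phi10 (y ^+ 2) = 0 ->
    (2 + (y ^+ 2 + (y ^+ 2)^*)) ^+ a * (2 - (y ^+ 2 + (y ^+ 2)^*)) ^+ b =
    (2 + (y ^+ 2 + (y ^+ 2)^*)) ^+ a' * (2 - (y ^+ 2 + (y ^+ 2)^*)) ^+ b'.
  move=> y1 y0; have y21 : `|y ^+ 2| = 1 by rewrite normrX y1 expr1n.
  rewrite -(normC_P_at_sqr a b y21) -(normC_P_at_sqr a' b' y21) -!evalC_P_at.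
  by rewrite (poly_identity_norm_eq Eq y1 y0).
have [w w0] := exists_phi10_root.
have w1 := phi10_norm1 w0.
have wV : w^* = w^-1 by rewrite invC_norm w1 expr1n invr1 mul1r.
have z1 : `|sqrtC w| = 1 by apply/eqP; rewrite -(@pexpr_eq1 _ _ 2) // -normrX sqrtCK w1.
have z3 : `|sqrtC w ^+ 3| = 1 by rewrite normrX z1 expr1n.
have := trace_eq _ z1; rewrite sqrtCK wV => /(_ w0) E.
have := trace_eq _ z3; rewrite exprAC sqrtCK rmorphXn /= wV (phi10_trace_expr3 w0).
move=> /(_ (phi10_expr3 w0)) E'.
apply: golden_exponents_inj E E'; last exact: phi10_trace_sqr.
by rewrite -wV CrealE rmorphD /= conjCK addrC.
Qed.

Local Close Scope ring_scope.

Theorem lemma6p1 (k1 k2 k1' k2' : nat) :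
  (doteq (P k1 k2) 1%R <-> (k1 = 0 /\ k2 = 0)) /\
  (doteq (P k1 k2) (P k1' k2') <-> (k1 = k1' /\ k2 = k2')).
Proof.
have doteq_P_iff a b a' b' : doteq (P a b) (P a' b') <-> a = a' /\ b = b'.
  by split=> [/doteq_P_inj | [<- <-]] //; exact: doteq_refl.
split; last exact: doteq_P_iff.
by rewrite -doteq_P_iff /P !expr0 mulr1.
Qed.
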